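(* Let $\Delta=\{\{1,3\},\{1,5\},\{3,5\}\}\in\mathcal{T}_6$. Then $\chi(\mathrm{KG}(\mathcal{T}_6\setminus\{\Delta\}))=4$.
   Context: Label the vertices of a convex hexagon by $1,\dots,6$ in cyclic order; $\mathrm{Diag}_6 = \{\{i,j\} \subseteq [6]: i-j\not\equiv \pm1 \pmod 6\}$; a triangulation is identified with its set of (three) diagonals, and $\mathcal{T}_6$ is the set of triangulations. For a set system $\mathcal{F}$, $\mathrm{KG}(\mathcal{F})$ is the graph on $\mathcal{F}$ with $F,F'$ adjacent iff $F\cap F'=\emptyset$. *)

From mathcomp Require Import all_boot all_order.
Set Implicit Arguments. Unset Strict Implicit. Unset Printing Implicit Defensive.

(* Vertices of the convex hexagon: 'I_6, where i : 'I_6 stands for label i+1. *)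
Definition V6 := 'I_6.

Definition adj6 (i j : V6) : bool :=
  ((i + 1) %% 6 == j) || ((j + 1) %% 6 == i).

Definition is_diag (d : {set V6}) : bool :=
  [exists i : V6, exists j : V6, [&& i < j, ~~ adj6 i j & d == [set i; j]]].

(* Two diagonals {a,b}, {c,d} (a<b, c<d) cross iff their endpoints strictly
   interleave around the polygon: a < c < b < d or c < a < d < b. *)
Definition cross (d e : {set V6}) : bool :=
  [exists a : V6, exists b : V6, exists c : V6, exists f : V6,
    [&& d == [set a; b], e == [set c; f], a < c, c < b & b < f]] ||
  [exists a : V6, exists b : V6, exists c : V6, exists f : V6,
    [&& e == [set a; b], d == [set c; f], a < c, c < b & b < f]].

Definition noncrossing (T : {set {set V6}}) : bool :=
  [forall d in T, is_diag d] && [forall d in T, forall e in T, ~~ cross d e].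

(* Triangulations = maximal sets of pairwise non-crossing diagonals
   (each has exactly three diagonals). *)
Definition T6 : {set {set {set V6}}} :=
  [set T | noncrossing T &
     [forall U : {set {set V6}}, (noncrossing U && (T \subset U)) ==> (U == T)]].

Definition KG_adj (F F' : {set {set V6}}) : bool := [disjoint F & F'].

Definition proper_coloring (S : {set {set {set V6}}}) (k : nat)
    (c : {set {set V6}} -> 'I_k) : Prop :=
  forall F F', F \in S -> F' \in S -> KG_adj F F' -> c F <> c F'.

Definition colorable (S : {set {set {set V6}}}) (k : nat) : Prop :=
  exists c : {set {set V6}} -> 'I_k, proper_coloring S c.

Definition chromatic_number_is (S : {set {set {set V6}}}) (n : nat) : Prop :=
  colorable S n /\ forall k, colorable S k -> n <= k.

(* Delta = {{1,3},{1,5},{3,5}}, i.e. 0-based {{0,2},{0,4},{2,4}}. *)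
Definition Delta : {set {set V6}} :=
  [set [set (inord 0 : V6); inord 2]; [set (inord 0 : V6); inord 4];
       [set (inord 2 : V6); inord 4]].

From Pilot Require Import Defs.
From mathcomp Require Import all_boot all_order.
Set Implicit Arguments. Unset Strict Implicit. Unset Printing Implicit Defensive.

(* Colour a triangulation by the first of the three short diagonals {0,2},
   {1,3}, {2,4} it contains, and by a fourth colour if it contains none of them.
   Two triangulations sharing one of the first three colours share a diagonal.
   A triangulation avoiding all three still contains {2,5}: by maximality one
   of its diagonals crosses {1,3}, and the only diagonals crossing {1,3} are
   {0,2}, {2,4} and {2,5}. So KG(T6), and a fortiori KG(T6 minus Delta), is
   4-colourable. Conversely, ten triangulations other than Delta span a
   subgraph with no proper 3-colouring, which is checked exhaustively.
   Triangulations are the maximal independent sets of the crossing relation on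
   the nine diagonals; this turns membership in T6 into a finite test on lists
   of vertex pairs. Vertices are numbered 0..5 as in Defs. *)

Section MaximalIndependentSets.

Variables (T : finType) (ok : pred T) (r : rel T).
Hypothesis r_sym : symmetric r.
Hypothesis r_irr : {in ok, irreflexive r}.

Definition independent (A : {set T}) : bool :=
  [forall x in A, ok x] && [forall x in A, forall y in A, ~~ r x y].

Definition maximal_independent (A : {set T}) : bool :=
  independent A && [forall U, independent U && (A \subset U) ==> (U == A)].

Lemma maximal_independentP A :
  reflect (independent A /\ forall x, ok x -> x \notin A -> exists2 y, y \in A & r x y)
          (maximal_independent A).
Proof.
apply: (iffP andP) => -[indA maxA]; split => //.
- move=> x okx xA; apply/exists_inP; apply: contraNT xA => /exists_inP noyA.
  have indU : independent (x |: A).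
    case/andP: indA => /forall_inP okA /forall_inP rA.
    apply/andP; split; apply/forall_inP => y; rewrite !inE.
      by case/predU1P => [->|/okA].
    move=> yU; apply/forall_inP => z; rewrite !inE.
    case/predU1P: yU => [->|yA]; case/predU1P => [->|zA].
    - by rewrite r_irr.
    - by apply/negP => rxz; apply: noyA; exists z.
    - by rewrite r_sym; apply/negP => rxy; apply: noyA; exists y.
    - exact: (forall_inP (rA y yA)).
  have /implyP := forallP maxA (x |: A).
  by rewrite indU subsetUr => /(_ isT) /eqP <-; rewrite setU11.
- apply/forallP => U; apply/implyP => /andP[indU sAU].
  rewrite eqEsubset sAU andbT; apply/subsetP => x xU.
  case/andP: indU => /forall_inP okU /forall_inP rU.
  apply: contraT => xA; have [y yA rxy] := maxA x (okU x xU) xA.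
  by have := forall_inP (rU x xU) y (subsetP sAU y yA); rewrite rxy.
Qed.

End MaximalIndependentSets.

Lemma set2_eq (T : finType) (a b c d : T) :
  ([set a; b] == [set c; d]) = (a == c) && (b == d) || (a == d) && (b == c).
Proof.
apply/eqP/idP => [E|]; last by case/orP => /andP[/eqP-> /eqP->] //; rewrite setUC.
have := set21 a b; have := set22 a b; have := set21 c d; have := set22 c d.
rewrite {1 2}E -{1 2}E !inE.
by do 4!case/pred2P=> ?; subst; rewrite ?eqxx ?orbT.
Qed.

Lemma set2_ord_eq n (a b c d : 'I_n) : a < b -> c < d ->
  ([set a; b] == [set c; d]) = (a == c) && (b == d).
Proof.
move=> lt_ab lt_cd; rewrite set2_eq; case: (a =P d) => [ad|_]; last by rewrite orbF.
case: (b =P c) => [bc|_]; last by rewrite andbF orbF.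
by subst; move: (ltn_trans lt_ab lt_cd); rewrite ltnn.
Qed.

Fixpoint words (T : Type) (A : seq T) n : seq (seq T) :=
  if n is n'.+1 then [seq x :: w | x <- A, w <- words A n'] else [:: [::]].

Lemma mem_words (T : eqType) (A : seq T) w : all (mem A) w -> w \in words A (size w).
Proof.
elim: w => [|x w IHw] /=; first by rewrite mem_seq1.
by case/andP=> xA /IHw wA; apply: (allpairs_f cons xA wA).
Qed.

Lemma colorable_subset (S S' : {set {set {set V6}}}) k :
  S' \subset S -> colorable S k -> colorable S' k.
Proof.
by move=> /subsetP sS'S [c proper_c]; exists c => F F' /sS'S FS /sS'S; apply: proper_c.
Qed.

Lemma colorable_widen (S : {set {set {set V6}}}) k m :
  k <= m -> colorable S k -> colorable S m.
Proof.
move=> le_km [c proper_c]; exists (fun F => widen_ord le_km (c F)) => F F' FS F'S disjFF'.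
by move=> /(congr1 val) /= /val_inj; apply: proper_c.
Qed.

(* Explicit ordinals rather than [inord], which does not reduce (it goes
   through the opaque [idP]): the finite checks below are closed by computation. *)
Definition vertices : seq V6 :=
  [:: @Ordinal 6 0 isT; @Ordinal 6 1 isT; @Ordinal 6 2 isT;
      @Ordinal 6 3 isT; @Ordinal 6 4 isT; @Ordinal 6 5 isT].

Definition vtx (k : nat) : V6 := nth ord0 vertices k.

Lemma mem_vertices (x : V6) : x \in vertices.
Proof. by case: x => -[|[|[|[|[|[|m]]]]]] Hm. Qed.

Lemma inord_vtx k : k < 6 -> inord k = vtx k.
Proof.
by move=> lt_k6; apply: val_inj; rewrite /= inordK //; case: k lt_k6 => [|[|[|[|[|[|]]]]]].
Qed.

Definition diag (p : V6 * V6) : {set V6} := [set p.1; p.2].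

Definition diag_pairs : seq (V6 * V6) :=
  [seq p : V6 * V6 <- [seq (x, y) | x <- vertices, y <- vertices]
     | (p.1 < p.2) && ~~ adj6 p.1 p.2].

Lemma mem_diag_pairs p : (p \in diag_pairs) = (p.1 < p.2) && ~~ adj6 p.1 p.2.
Proof.
rewrite mem_filter andb_idr //; case: p => x y _.
exact: (allpairs_f pair (mem_vertices x) (mem_vertices y)).
Qed.

Lemma diag_inj : {in diag_pairs &, injective diag}.
Proof.
move=> [a b] [c d]; rewrite !mem_diag_pairs /= => /andP[lt_ab _] /andP[lt_cd _] /eqP.
by rewrite /diag /= set2_ord_eq // => /andP[/eqP-> /eqP->].
Qed.

Lemma is_diagP d : reflect (exists2 p, p \in diag_pairs & d = diag p) (is_diag d).
Proof.
apply: (iffP existsP) => [[x /existsP[y /and3P[lt_xy nadj /eqP ->]]] | [[x y]]].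
  by exists (x, y); rewrite // mem_diag_pairs lt_xy.
rewrite mem_diag_pairs => /andP[lt_xy nadj] ->.
by exists x; apply/existsP; exists y; rewrite lt_xy nadj eqxx.
Qed.

Definition interleave (p q : V6 * V6) : bool := [&& p.1 < q.1, q.1 < p.2 & p.2 < q.2].

Definition crossing (p q : V6 * V6) : bool := interleave p q || interleave q p.

Lemma exists_interleaving (a b c d : V6) : a < b -> c < d ->
  [exists x, exists y, exists z, exists t,
     [&& [set a; b] == [set x; y], [set c; d] == [set z; t], x < z, z < y & y < t]]
  = interleave (a, b) (c, d).
Proof.
move=> lt_ab lt_cd; apply/existsP/idP => [[x]|/and3P[ac cb bd]].
  case/existsP=> y /existsP[z /existsP[t /and5P[E1 E2 xz zy yt]]].
  have xy := ltn_trans xz zy; have zt := ltn_trans zy yt.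
  rewrite !set2_ord_eq // in E1 E2.
  by case/andP: E1 E2 => /eqP-> /eqP-> /andP[/eqP-> /eqP->]; apply/and3P.
exists a; apply/existsP; exists b; apply/existsP; exists c; apply/existsP; exists d.
by rewrite !eqxx ac cb bd.
Qed.

Lemma cross_diag p q : p \in diag_pairs -> q \in diag_pairs ->
  cross (diag p) (diag q) = crossing p q.
Proof.
case: p q => [a b] [c d]; rewrite !mem_diag_pairs /= => /andP[lt_ab _] /andP[lt_cd _].
by rewrite /cross /diag !exists_interleaving.
Qed.

Lemma cross_sym : symmetric cross.
Proof. by move=> d e; rewrite /cross orbC. Qed.

Lemma cross_irr : {in is_diag, irreflexive cross}.
Proof.
move=> d /is_diagP[[a b] pD ->]; rewrite cross_diag // /crossing orbb.
by rewrite /interleave /= ltnn.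
Qed.

Lemma T6P F :
  reflect (noncrossing F /\
           forall d, is_diag d -> d \notin F -> exists2 e, e \in F & cross d e)
          (F \in T6).
Proof. by rewrite inE; apply: (maximal_independentP cross_sym cross_irr). Qed.

Definition family (s : seq (V6 * V6)) : {set {set V6}} := [set d in map diag s].

Lemma familyP s d : reflect (exists2 p, p \in s & d = diag p) (d \in family s).
Proof. by rewrite inE; apply: mapP. Qed.

Lemma mem_family s p : {subset s <= diag_pairs} -> p \in diag_pairs ->
  (diag p \in family s) = (p \in s).
Proof.
move=> sD pD; apply/familyP/idP => [[q qs Epq]|]; last by exists p.
by rewrite (diag_inj pD (sD q qs) Epq).
Qed.

Lemma disjoint_family s t : {subset s <= diag_pairs} -> {subset t <= diag_pairs} ->
  ~~ has (mem t) s -> [disjoint family s & family t].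
Proof.
move=> sD tD /hasPn st; rewrite disjoint_subset; apply/subsetP => _ /familyP[p ps ->].
by rewrite inE mem_family ?sD ?st.
Qed.

Definition triangulated (s : seq (V6 * V6)) : bool :=
  all (fun p => all (fun q => ~~ crossing p q) s) s &&
  all (fun p => (p \in s) || has (crossing p) s) diag_pairs.

Lemma family_T6 s : {subset s <= diag_pairs} -> triangulated s -> family s \in T6.
Proof.
move=> sD /andP[/allP noncross /allP dominate]; apply/T6P; split.
  apply/andP; split; apply/forall_inP => _ /familyP[p ps ->].
    by apply/is_diagP; exists p; rewrite ?sD.
  apply/forall_inP => _ /familyP[q qs ->].
  by rewrite cross_diag ?sD //; apply: (allP (noncross p ps)).
move=> _ /is_diagP[p pD ->]; rewrite mem_family // => pNs.
have /hasP[q qs cpq] : has (crossing p) s by have := dominate p pD; rewrite (negbTE pNs).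
exists (diag q); first by rewrite mem_family ?sD.
by rewrite cross_diag // sD.
Qed.

Definition delta_pairs : seq (V6 * V6) := [:: (vtx 0, vtx 2); (vtx 0, vtx 4); (vtx 2, vtx 4)].

Lemma Delta_family : Delta = family delta_pairs.
Proof. by apply/setP => d; rewrite /Delta !inord_vtx // !inE -orbA. Qed.

Definition short_diag (i : nat) : {set V6} := diag (vtx i, vtx i.+2).

Definition short_colour (F : {set {set V6}}) : 'I_4 :=
  inord (find (fun i => short_diag i \in F) (iota 0 3)).

Lemma short_colourE F :
  (short_colour F : nat) = find (fun i => short_diag i \in F) (iota 0 3).
Proof. by rewrite inordK // ltnS (leq_trans (find_size _ _)). Qed.

Lemma short_colour_mem F : short_colour F < 3 -> short_diag (short_colour F) \in F.
Proof.
rewrite short_colourE => lt_c3.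
have has_short : has (fun i => short_diag i \in F) (iota 0 3) by rewrite has_find.
by have := nth_find 0 has_short; rewrite nth_iota.
Qed.

Lemma short_colour_max F i : 3 <= short_colour F -> i < 3 -> short_diag i \notin F.
Proof.
rewrite short_colourE => ge_c3 lt_i3.
have /hasPn : ~~ has (fun i => short_diag i \in F) (iota 0 3) by rewrite has_find -leqNgt.
by apply; rewrite mem_iota.
Qed.

Lemma crossing_diag13 : {in diag_pairs, forall q, crossing (vtx 1, vtx 3) q ==>
  (q \in [:: (vtx 0, vtx 2); (vtx 2, vtx 4); (vtx 2, vtx 5)])}.
Proof. by apply/allP. Qed.

Lemma mem_diag25 F : F \in T6 -> (forall i, i < 3 -> short_diag i \notin F) ->
  diag (vtx 2, vtx 5) \in F.
Proof.
case/T6P=> -[/andP[/forall_inP Fdiag _] dominate] noshort.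
have diag13 : is_diag (short_diag 1) by apply/is_diagP; exists (vtx 1, vtx 3).
have [e eF] := dominate _ diag13 (noshort 1 isT).
have /is_diagP[q qD Ee] := Fdiag e eF; rewrite {}Ee in eF *.
rewrite cross_diag // => /(implyP (crossing_diag13 qD)); rewrite !inE.
case/or3P=> /eqP Eq; rewrite Eq in eF => //.
  by case/negP: (noshort 0 isT).
by case/negP: (noshort 2 isT).
Qed.

Lemma colorable_T6 : colorable T6 4.
Proof.
exists short_colour => F F' FT F'T disjFF' same.
have [lt_c3|ge_c3] := ltnP (short_colour F) 3.
  have lt_c3' : short_colour F' < 3 by rewrite -same.
  move: (short_colour_mem lt_c3'); rewrite -same.
  by rewrite (disjointFr disjFF' (short_colour_mem lt_c3)).
have ge_c3' : 3 <= short_colour F' by rewrite -same.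
move: (mem_diag25 F'T (fun i => short_colour_max ge_c3')).
by rewrite (disjointFr disjFF' (mem_diag25 FT (fun i => short_colour_max ge_c3))).
Qed.

(* Ten triangulations other than Delta; [critical_edges] lists, by position in
   [critical], the disjoint pairs among them. *)
Definition critical : seq (seq (V6 * V6)) :=
  [:: [:: (vtx 0, vtx 2); (vtx 0, vtx 3); (vtx 0, vtx 4)];
      [:: (vtx 0, vtx 2); (vtx 0, vtx 3); (vtx 3, vtx 5)];
      [:: (vtx 0, vtx 2); (vtx 2, vtx 4); (vtx 2, vtx 5)];
      [:: (vtx 0, vtx 3); (vtx 1, vtx 3); (vtx 3, vtx 5)];
      [:: (vtx 0, vtx 4); (vtx 1, vtx 3); (vtx 1, vtx 4)];
      [:: (vtx 0, vtx 4); (vtx 1, vtx 4); (vtx 2, vtx 4)];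
      [:: (vtx 1, vtx 3); (vtx 1, vtx 4); (vtx 1, vtx 5)];
      [:: (vtx 1, vtx 3); (vtx 1, vtx 5); (vtx 3, vtx 5)];
      [:: (vtx 1, vtx 5); (vtx 2, vtx 4); (vtx 2, vtx 5)];
      [:: (vtx 1, vtx 5); (vtx 2, vtx 5); (vtx 3, vtx 5)]].

Definition critical_edges : seq (nat * nat) :=
  [:: (0, 6); (0, 7); (0, 8); (0, 9); (1, 4); (1, 5); (1, 6); (1, 8); (2, 3);
      (2, 4); (2, 6); (2, 7); (3, 5); (3, 8); (4, 8); (4, 9); (5, 7); (5, 9)].

Lemma critical_triangulations : all (fun s =>
  [&& all (mem diag_pairs) s, triangulated s & ~~ all (mem s) delta_pairs]) critical.
Proof. by []. Qed.

Lemma critical_edges_disjoint : all (fun e =>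
  [&& e.1 < size critical, e.2 < size critical &
      ~~ has (mem (nth [::] critical e.2)) (nth [::] critical e.1)]) critical_edges.
Proof. by []. Qed.

Lemma critical_edges_not_3_colourable :
  all (fun w => has (fun e => nth 0 w e.1 == nth 0 w e.2) critical_edges)
      (words [:: 0; 1; 2] (size critical)).
Proof. by vm_compute. Qed.

Lemma critical_family_mem s : s \in critical -> family s \in T6 :\ Delta.
Proof.
move=> /(allP critical_triangulations) /and3P[/allP sD tri_s notDelta].
rewrite in_setD1 family_T6 // andbT Delta_family; apply: contra notDelta => /eqP Es.
have deltaD : {subset delta_pairs <= diag_pairs} by apply/allP.
apply/allP => p p_delta /=; have pD := deltaD p p_delta.
by rewrite -(mem_family sD pD) Es mem_family.
Qed.

Lemma not_colorable_3 : ~ colorable (T6 :\ Delta) 3.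
Proof.
case=> c proper_c; pose w := [seq val (c (family s)) | s <- critical].
have /(allP critical_edges_not_3_colourable) : w \in words [:: 0; 1; 2] (size critical).
  rewrite -(size_map (fun s => val (c (family s)))); apply: mem_words.
  by apply/allP => _ /mapP[s _ ->]; case: (c _) => -[|[|[|]]].
case/hasP=> -[i j] /(allP critical_edges_disjoint) /and3P[lt_i lt_j disj_ij] /=.
rewrite !(nth_map [::]) // => /eqP /val_inj; apply: proper_c.
- exact/critical_family_mem/mem_nth.
- exact/critical_family_mem/mem_nth.
have sub_ij k : k < size critical -> {subset nth [::] critical k <= diag_pairs}.
  by move=> lt_k; case/and3P: (allP critical_triangulations _ (mem_nth [::] lt_k)) => /allP.
exact: disjoint_family (sub_ij _ lt_i) (sub_ij _ lt_j) disj_ij.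
Qed.

Theorem proposition3p6 : chromatic_number_is (T6 :\ Delta) 4.
Proof.
split; first exact: colorable_subset (subD1set T6 Delta) colorable_T6.
move=> k colorable_k; rewrite leqNgt; apply/negP => lt_k4.
exact: not_colorable_3 (@colorable_widen _ k 3 lt_k4 colorable_k).
Qed.
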